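(* Let $\phi\in T_m(\mathbb{R}^d)$ be a conjugation invariant homogeneous of degree $m$. Then $\phi=\operatorname{shift}_m(\phi)$.
   Context: $T_m(\mathbb{R}^d)=(\mathbb{R}^d)^{\otimes m}$ has basis the words of length $m$ over $\{1,\dots,d\}$. $\operatorname{shift}_m$ is the linear automorphism of $T_m$ with $\operatorname{shift}_m(w_1\cdots w_m)=w_m w_1\cdots w_{m-1}$. A path is a piecewise smooth $X:[0,1]\to\mathbb{R}^d$ with iterated-integrals signature $S(X)\in T((\mathbb{R}^d))$ ($\langle S(X),\mathsf e\rangle=1$, $\langle S(X),wi\rangle=\int_0^1\langle S(X|_{[0,t]}),w\rangle dX^i(t)$, where $\langle\sum_w c_w w,v\rangle=c_v$). $\sqcup$ is concatenation, $B^{-1}$ the reversed path. $\phi$ is a conjugation invariant if $\langle S(A),\phi\rangle=\langle S(B\sqcup A\sqcup B^{-1}),\phi\rangle$ for all paths $A,B$. *)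

From Stdlib Require Import Reals List Arith.
From Coquelicot Require Import Coquelicot.
Import ListNotations.
Open Scope R_scope.

(* Letters of the alphabet are 0..d-1 (standing for 1..d).
   Words are lists of letters. *)

Fixpoint words (m d : nat) : list (list nat) :=
  match m with
  | O => [nil]
  | S m' => flat_map (fun w => map (fun i => i :: w) (seq 0 d)) (words m' d)
  end.

(* An element of T_m(R^d): its coefficient on each word of length m
   (values on other lists are irrelevant). *)
Definition tensor := list nat -> R.

Definition sum_words (m d : nat) (f : list nat -> R) : R :=
  fold_right Rplus 0 (map f (words m d)).

(* shift_m (w_1 ... w_m) = w_m w_1 ... w_{m-1} *)
Definition shift_word (w : list nat) : list nat :=
  match rev w with
  | nil => nil
  | a :: r => a :: rev r
  end.

Definition shiftT (m d : nat) (phi : tensor) : tensor :=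
  fun v => sum_words m d
    (fun w => if list_eq_dec Nat.eq_dec (shift_word w) v then phi w else 0).

(* Paths: X i t is the i-th coordinate at time t (only t in [0,1], i < d matter). *)
Definition path := nat -> R -> R.

Definition smooth (g : R -> R) : Prop :=
  forall (n : nat) (x : R), ex_derive (Derive_n g n) x.

Definition piecewise_smooth (d : nat) (X : path) : Prop :=
  exists (n : nat) (t : nat -> R),
    t O = 0 /\ t n = 1 /\
    (forall j, (j < n)%nat -> t j < t (S j)) /\
    (forall j i, (j < n)%nat -> (i < d)%nat ->
       exists g : R -> R, smooth g /\
         forall s, t j <= s <= t (S j) -> X i s = g s).

(* iterated integrals, indexed by the reversed word:
   <S(X|[0,t]), e> = 1,  <S(X|[0,t]), w i> = int_0^t <S(X|[0,s]), w> dX^i(s) *)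
Fixpoint sig_rev (X : path) (rw : list nat) (t : R) : R :=
  match rw with
  | nil => 1
  | i :: rw' => RInt (fun s => sig_rev X rw' s * Derive (X i) s) 0 t
  end.

Definition sig (X : path) (w : list nat) : R := sig_rev X (rev w) 1.

Definition pairing (m d : nat) (X : path) (phi : tensor) : R :=
  sum_words m d (fun w => phi w * sig X w).

Definition concat (X Y : path) : path :=
  fun i t => if Rle_dec t (1/2) then X i (2 * t)
             else Y i (2 * t - 1) - Y i 0 + X i 1.

Definition reverse (X : path) : path := fun i t => X i (1 - t).

Definition conjugation_invariant (m d : nat) (phi : tensor) : Prop :=
  forall A B : path, piecewise_smooth d A -> piecewise_smooth d B ->
    pairing m d A phi = pairing m d (concat B (concat A (reverse B))) phi.

From Stdlib Require Import Reals List Arith Lra Lia FunctionalExtensionality.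
From Coquelicot Require Import Coquelicot.
Import ListNotations.
Open Scope R_scope.

(* On polygonal paths (concatenations of straight segments) signatures obey
   Chen's identity  S(X.Y)(w) = sum_{w = p q} S(X)(p) S(Y)(q).  Conjugating A by the
   segment B_e of length e in direction b and differentiating the invariance at e = 0
   yields  sum_q (phi(b q) - phi(q b)) S(A)(q) = 0  for every polygonal A.  Signatures of
   polygonal paths separate words: appending a segment in direction c and
   differentiating strips a final letter c, so by induction on the length every
   coefficient of such a vanishing combination is zero.  Hence phi(b q) = phi(q b),
   i.e. phi = shift(phi). *)

Definition lsum {A} (l : list A) (f : A -> R) : R := fold_right Rplus 0 (map f l).

Lemma lsum_app {A} (l1 l2 : list A) f : lsum (l1 ++ l2) f = lsum l1 f + lsum l2 f.
Proof. induction l1 as [|x l1 IH]; unfold lsum in *; simpl; [ring|]. rewrite IH. ring. Qed.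

Lemma lsum_flat_map {A B} (l : list A) (g : A -> list B) f :
  lsum (flat_map g l) f = lsum l (fun x => lsum (g x) f).
Proof. induction l as [|x l IH]; [reflexivity|]. simpl. rewrite lsum_app, IH. reflexivity. Qed.

Lemma lsum_ext_in {A} (l : list A) f g :
  (forall x, In x l -> f x = g x) -> lsum l f = lsum l g.
Proof.
  induction l as [|x l IH]; intros H; [reflexivity|]. unfold lsum; simpl.
  rewrite H by (left; auto). f_equal. apply IH. intros; apply H; right; auto.
Qed.

Lemma lsum_plus {A} (l : list A) f g : lsum l (fun x => f x + g x) = lsum l f + lsum l g.
Proof. induction l as [|x l IH]; unfold lsum in *; simpl; [ring|]. rewrite IH. ring. Qed.

Lemma lsum_minus {A} (l : list A) f g : lsum l (fun x => f x - g x) = lsum l f - lsum l g.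
Proof. induction l as [|x l IH]; unfold lsum in *; simpl; [ring|]. rewrite IH. ring. Qed.

Lemma lsum_zero {A} (l : list A) : lsum l (fun _ => 0) = 0.
Proof. induction l as [|x l IH]; unfold lsum in *; simpl; [ring|]. rewrite IH. ring. Qed.

Lemma lsum_swap {A B} (l1 : list A) (l2 : list B) f :
  lsum l1 (fun x => lsum l2 (fun y => f x y)) = lsum l2 (fun y => lsum l1 (fun x => f x y)).
Proof.
  induction l1 as [|x l1 IH]; unfold lsum at 1; simpl.
  - symmetry. apply lsum_zero.
  - fold (lsum l1 (fun x => lsum l2 (fun y => f x y))). rewrite IH, <- lsum_plus. reflexivity.
Qed.

Lemma lsum_seq_delta d b (g : nat -> R) : (b < d)%nat ->
  lsum (seq 0 d) (fun i => if Nat.eqb i b then g i else 0) = g b.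
Proof.
  induction d as [|d IH]; intros Hb; [lia|].
  rewrite seq_S, lsum_app. simpl (0 + d)%nat.
  destruct (Nat.eq_dec b d) as [->|Hne].
  - rewrite (lsum_ext_in _ _ (fun _ => 0)).
    + rewrite lsum_zero. unfold lsum; simpl. rewrite Nat.eqb_refl. ring.
    + intros x Hx. apply in_seq in Hx. destruct (Nat.eqb_spec x d); [lia|reflexivity].
  - rewrite IH by lia. unfold lsum; simpl. destruct (Nat.eqb_spec d b); [lia|]. ring.
Qed.

Lemma In_words m d w :
  In w (words m d) <-> length w = m /\ List.Forall (fun x => (x < d)%nat) w.
Proof.
  revert w. induction m as [|m IH]; intros w; simpl.
  - split.
    + intros [<-|[]]. split; auto.
    + intros [Hl _]. destruct w; [auto|simpl in Hl; lia].
  - rewrite in_flat_map. split.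
    + intros [x [Hx Hw]]. apply in_map_iff in Hw. destruct Hw as [i [<- Hi]].
      apply in_seq in Hi. apply IH in Hx. destruct Hx as [Hl HF].
      simpl. split; [lia|]. constructor; [lia|auto].
    + intros [Hl HF]. destruct w as [|i w]; [simpl in Hl; lia|].
      inversion HF; subst. exists w. split.
      * apply IH. split; auto.
      * apply in_map_iff. exists i. split; auto. apply in_seq. lia.
Qed.

Lemma In_words_cons m d b q : In (b :: q) (words (S m) d) <-> (b < d)%nat /\ In q (words m d).
Proof.
  rewrite !In_words. simpl. split.
  - intros [Hl HF]. inversion HF; subst. split; [auto|split; auto].
  - intros [Hb [Hl HF]]. split; [lia|constructor; auto].
Qed.

Lemma In_words_snoc m d q b : In (q ++ [b]) (words (S m) d) <-> In q (words m d) /\ (b < d)%nat.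
Proof.
  rewrite !In_words, length_app, Forall_app. simpl. split.
  - intros [Hl [HF Hb]]. inversion Hb; subst. split; [split; [lia|auto]|auto].
  - intros [[Hl HF] Hb]. split; [lia|split; auto].
Qed.

Lemma words_S_cons m d w : In w (words (S m) d) ->
  exists b q, w = b :: q /\ (b < d)%nat /\ In q (words m d).
Proof.
  destruct w as [|b q]; intros H.
  - apply In_words in H. simpl in H. lia.
  - exists b, q. split; [reflexivity|]. apply In_words_cons, H.
Qed.

Lemma words_S_snoc m d w : In w (words (S m) d) ->
  exists q b, w = q ++ [b] /\ In q (words m d) /\ (b < d)%nat.
Proof.
  intros H. assert (Hw : w <> []) by (intros ->; apply In_words in H; simpl in H; lia).
  destruct (exists_last Hw) as [q [b ->]].
  exists q, b. split; [reflexivity|]. apply In_words_snoc, H.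
Qed.

Lemma lsum_words_cons m d f :
  lsum (words (S m) d) f = lsum (words m d) (fun q => lsum (seq 0 d) (fun b => f (b :: q))).
Proof.
  simpl. rewrite lsum_flat_map. apply lsum_ext_in. intros q _.
  unfold lsum. rewrite map_map. reflexivity.
Qed.

Lemma lsum_words_snoc m d f :
  lsum (words (S m) d) f = lsum (words m d) (fun q => lsum (seq 0 d) (fun b => f (q ++ [b]))).
Proof.
  revert f. induction m as [|m IH]; intros f.
  - rewrite lsum_words_cons. reflexivity.
  - rewrite lsum_words_cons, (IH (fun w => lsum (seq 0 d) (fun i => f (i :: w)))),
      (lsum_words_cons m d).
    apply lsum_ext_in. intros q _. apply lsum_swap.
Qed.

Lemma lsum_words_delta m d v (g : list nat -> R) : In v (words m d) ->
  lsum (words m d) (fun w => if list_eq_dec Nat.eq_dec w v then g w else 0) = g v.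
Proof.
  revert v g. induction m as [|m IH]; intros v g Hv.
  - simpl in Hv. destruct Hv as [<-|[]]. unfold lsum; simpl. ring.
  - destruct (words_S_cons _ _ _ Hv) as [b [q [-> [Hb Hq]]]].
    rewrite lsum_words_cons.
    rewrite (lsum_ext_in _ _ (fun w => if list_eq_dec Nat.eq_dec w q then g (b :: w) else 0)).
    + apply (IH q (fun w => g (b :: w)) Hq).
    + intros w _. rewrite <- (lsum_seq_delta d b (fun i =>
        if list_eq_dec Nat.eq_dec w q then g (i :: w) else 0) Hb).
      apply lsum_ext_in. intros i _.
      destruct (list_eq_dec Nat.eq_dec (i :: w) (b :: q)) as [E|E];
        destruct (Nat.eqb_spec i b); destruct (list_eq_dec Nat.eq_dec w q);
        subst; try congruence; reflexivity.
Qed.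

Lemma shift_word_snoc q b : shift_word (q ++ [b]) = b :: q.
Proof. unfold shift_word. rewrite rev_app_distr. simpl. rewrite rev_involutive. reflexivity. Qed.

Lemma shift_word_eq_cons w b q : shift_word w = b :: q <-> w = q ++ [b].
Proof.
  split; [|intros ->; apply shift_word_snoc].
  intros H. induction w as [|a w' _] using rev_ind; [discriminate|].
  rewrite shift_word_snoc in H. inversion H; subst. reflexivity.
Qed.

(* [sum_split w F] is the sum of [F p q] over all decompositions [w = p ++ q]. *)
Fixpoint sum_split (w : list nat) (F : list nat -> list nat -> R) : R :=
  match w with
  | nil => F nil nil
  | a :: w' => F nil w + sum_split w' (fun p q => F (a :: p) q)
  end.

Lemma sum_split_ext w F G : (forall p q, F p q = G p q) -> sum_split w F = sum_split w G.
Proof.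
  revert F G; induction w as [|a w IH]; intros F G H; simpl.
  - apply H.
  - rewrite H. f_equal. apply IH. intros; apply H.
Qed.

Lemma sum_split_mult_r w F c : sum_split w F * c = sum_split w (fun p q => F p q * c).
Proof.
  revert F; induction w as [|a w IH]; intros F; simpl; [reflexivity|].
  rewrite Rmult_plus_distr_r, IH. reflexivity.
Qed.

Lemma sum_split_plus w F G :
  sum_split w (fun p q => F p q + G p q) = sum_split w F + sum_split w G.
Proof.
  revert F G; induction w as [|a w IH]; intros F G; simpl; [reflexivity|].
  rewrite (IH (fun p q => F (a :: p) q) (fun p q => G (a :: p) q)). ring.
Qed.

Lemma sum_split_zero w : sum_split w (fun _ _ => 0) = 0.
Proof. induction w as [|a w IH]; simpl; [reflexivity|]. rewrite IH. ring. Qed.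

Lemma sum_split_app_last w a F :
  sum_split (w ++ [a]) F = sum_split w (fun p q => F p (q ++ [a])) + F (w ++ [a]) nil.
Proof.
  revert F; induction w as [|x w IH]; intros F; simpl; [reflexivity|].
  rewrite IH. ring.
Qed.

Lemma sum_split_rev w F : sum_split (rev w) F = sum_split w (fun p q => F (rev q) (rev p)).
Proof.
  revert F; induction w as [|a w IH]; intros F; [reflexivity|].
  simpl rev at 1. rewrite sum_split_app_last, IH. simpl. rewrite Rplus_comm. reflexivity.
Qed.

(* [ind_nil] is the signature of a constant path; [ind_letter b] is the derivative at
   [e = 0] of the signature of a segment of length [e] in direction [b]. *)
Definition ind_nil (p : list nat) : R := match p with nil => 1 | _ => 0 end.

Definition ind_letter (b : nat) (p : list nat) : R :=
  match p with [x] => if Nat.eqb x b then 1 else 0 | _ => 0 end.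

Lemma sum_split_nil_l w G : sum_split w (fun p q => ind_nil p * G q) = G w.
Proof.
  destruct w as [|a w]; simpl; [ring|].
  rewrite (sum_split_ext _ _ (fun _ _ => 0)) by (intros; simpl; ring).
  rewrite sum_split_zero. ring.
Qed.

Lemma sum_split_nil_r w G : sum_split w (fun p q => G p * ind_nil q) = G w.
Proof.
  revert G. induction w as [|a w IH]; intros G; simpl; [ring|].
  rewrite (IH (fun p => G (a :: p))). ring.
Qed.

Lemma sum_split_letter_l x w b G :
  sum_split (x :: w) (fun p q => ind_letter b p * G q) = if Nat.eqb x b then G w else 0.
Proof.
  simpl. rewrite (sum_split_ext _ _
    (fun p q => ind_nil p * ((if Nat.eqb x b then 1 else 0) * G q))).
  - rewrite sum_split_nil_l. destruct (Nat.eqb x b); ring.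
  - intros p q. destruct p; simpl; destruct (Nat.eqb x b); ring.
Qed.

Lemma sum_split_letter_r w x b G :
  sum_split (w ++ [x]) (fun p q => G p * ind_letter b q) = if Nat.eqb x b then G w else 0.
Proof.
  revert G. induction w as [|a w IH]; intros G.
  - simpl. destruct (Nat.eqb x b); ring.
  - change ((a :: w) ++ [x]) with (a :: (w ++ [x])). simpl sum_split.
    rewrite (IH (fun p => G (a :: p))).
    destruct (w ++ [x]) as [|y r] eqn:E; [destruct w; discriminate|]. simpl. ring.
Qed.

Lemma lsum_words_split_letter_l m d b phi G : (b < d)%nat ->
  lsum (words (S m) d) (fun w => phi w * sum_split w (fun p q => ind_letter b p * G q)) =
  lsum (words m d) (fun q => phi (b :: q) * G q).
Proof.
  intros Hb. rewrite lsum_words_cons. apply lsum_ext_in. intros q _.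
  rewrite <- (lsum_seq_delta d b (fun i => phi (i :: q) * G q) Hb).
  apply lsum_ext_in. intros i _. rewrite sum_split_letter_l.
  destruct (Nat.eqb i b); ring.
Qed.

Lemma lsum_words_split_letter_r m d b phi G : (b < d)%nat ->
  lsum (words (S m) d) (fun w => phi w * sum_split w (fun p q => G p * ind_letter b q)) =
  lsum (words m d) (fun p => phi (p ++ [b]) * G p).
Proof.
  intros Hb. rewrite lsum_words_snoc. apply lsum_ext_in. intros p _.
  rewrite <- (lsum_seq_delta d b (fun i => phi (p ++ [i]) * G p) Hb).
  apply lsum_ext_in. intros i _. rewrite sum_split_letter_r.
  destruct (Nat.eqb i b); ring.
Qed.

(* Coquelicot's lemmas specialised to real-valued functions, so that [apply] can
   unify them with goals written with [Rplus] and [Rmult]. *)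
Lemma is_RInt_ChaslesR (f : R -> R) a b c l1 l2 :
  is_RInt f a b l1 -> is_RInt f b c l2 -> is_RInt f a c (l1 + l2).
Proof. exact (is_RInt_Chasles f a b c l1 l2). Qed.

Lemma is_RInt_plusR (f g : R -> R) a b l1 l2 :
  is_RInt f a b l1 -> is_RInt g a b l2 -> is_RInt (fun x => f x + g x) a b (l1 + l2).
Proof. exact (is_RInt_plus f g a b l1 l2). Qed.

Lemma is_RInt_scalR (f : R -> R) k a b l :
  is_RInt f a b l -> is_RInt (fun x => k * f x) a b (k * l).
Proof. exact (is_RInt_scal f a b k l). Qed.

Lemma is_RInt_comp_linR (f : R -> R) u v a b l :
  is_RInt f (u * a + v) (u * b + v) l -> is_RInt (fun y => u * f (u * y + v)) a b l.
Proof. exact (is_RInt_comp_lin f u v a b l). Qed.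

Lemma is_RInt_extR (f g : R -> R) a b l :
  (forall x, Rmin a b < x < Rmax a b -> f x = g x) -> is_RInt f a b l -> is_RInt g a b l.
Proof. exact (is_RInt_ext f g a b l). Qed.

Lemma is_RInt_subinterval (f : R -> R) a b c :
  a <= b <= c -> ex_RInt f a c -> is_RInt f a b (RInt f a b).
Proof. intros Hb Hf. exact (RInt_correct f a b (ex_RInt_Chasles_1 f a b c Hb Hf)). Qed.

Lemma is_derive_plusR (f g : R -> R) x df dg :
  is_derive f x df -> is_derive g x dg -> is_derive (fun y => f y + g y) x (df + dg).
Proof. exact (is_derive_plus f g x df dg). Qed.

Lemma is_derive_multR (f g : R -> R) x df dg : is_derive f x df -> is_derive g x dg ->
  is_derive (fun y => f y * g y) x (df * g x + f x * dg).
Proof. intros Hf Hg. exact (is_derive_mult f g x df dg Hf Hg Rmult_comm). Qed.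

Lemma is_derive_constR (c x : R) : is_derive (fun _ => c) x 0.
Proof. exact (is_derive_const c x). Qed.

Lemma is_derive_value (f : R -> R) x l l' : is_derive f x l -> l = l' -> is_derive f x l'.
Proof. intros H <-. exact H. Qed.

Lemma is_derive_lsum {A} (l : list A) (f : R -> A -> R) f' x :
  (forall a, is_derive (fun e => f e a) x (f' a)) ->
  is_derive (fun e => lsum l (f e)) x (lsum l f').
Proof.
  intros H. induction l as [|a l IH].
  - unfold lsum; simpl. apply is_derive_constR.
  - exact (is_derive_plusR (fun e => f e a) (fun e => lsum l (f e)) x _ _ (H a) IH).
Qed.

Lemma is_derive_sum_split w (F : R -> list nat -> list nat -> R) F' x :
  (forall p q, is_derive (fun e => F e p q) x (F' p q)) ->
  is_derive (fun e => sum_split w (F e)) x (sum_split w F').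
Proof.
  revert F F'. induction w as [|a w IH]; intros F F' H; simpl; [apply H|].
  apply (is_derive_plusR (fun e => F e nil (a :: w))
           (fun e => sum_split w (fun p q => F e (a :: p) q))); [apply H|].
  apply (IH (fun e p q => F e (a :: p) q)). intros; apply H.
Qed.

Lemma is_derive_const_eq0 (g : R -> R) C x L : (forall e, g e = C) -> is_derive g x L -> L = 0.
Proof.
  intros Hg HL. apply is_derive_unique in HL.
  rewrite <- HL, (Derive_ext g (fun _ => C)) by auto. apply Derive_const.
Qed.

Lemma is_RInt_sum_split w (F : R -> list nat -> list nat -> R) I a b :
  (forall p q, is_RInt (fun s => F s p q) a b (I p q)) ->
  is_RInt (fun s => sum_split w (F s)) a b (sum_split w I).
Proof.
  revert F I. induction w as [|x w IH]; intros F I H; simpl; [apply H|].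
  apply (is_RInt_plusR (fun s => F s nil (x :: w))
           (fun s => sum_split w (fun p q => F s (x :: p) q))); [apply H|].
  apply (IH (fun s p q => F s (x :: p) q)). intros; apply H.
Qed.

(* Equations between real numbers produced by Coquelicot lemmas live in [R_NormedModule]
   etc.; [field] only recognises them after this retyping. *)
Ltac real_eq := match goal with |- ?l = ?r => change (@eq R l r) end.

Definition right_affine_at (f : R -> R) (s D : R) : Prop :=
  exists delta, delta > 0 /\ forall h, 0 < h < delta -> f (s + h) = f s + D * h.

(* Coquelicot's [Derive f s] is the limit of the difference quotients at [s + 1/(n+1)],
   so it is a right derivative; in particular it is meaningful at the corners of
   polygonal paths. *)
Lemma Derive_right_affine_at f s D : right_affine_at f s D -> Derive f s = D.
Proof.
  intros [delta [Hd H]]. unfold Derive, Lim.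
  destruct (archimed_cor1 delta Hd) as [N [HN HN0]].
  rewrite (Lim_seq_ext_loc _ (fun _ => D)); [rewrite Lim_seq_const; reflexivity|].
  exists N. intros n Hn. simpl.
  assert (Hpos : 0 < / (INR n + 1)).
  { apply Rinv_0_lt_compat. pose proof (pos_INR n). lra. }
  assert (Hlt : / (INR n + 1) < delta).
  { apply Rle_lt_trans with (/ INR N); [|lra].
    apply Rinv_le_contravar; [apply lt_0_INR; exact HN0|].
    apply le_INR in Hn. lra. }
  rewrite Rplus_0_l, H by lra. field. pose proof (pos_INR n). lra.
Qed.

(** * Signatures of segments *)

Definition right_affine (X : path) : Prop := forall i s, exists D, right_affine_at (X i) s D.

Definition sig_integrand (X : path) (rw : list nat) (i : nat) (s : R) : R :=
  sig_rev X rw s * Derive (X i) s.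

Definition integrable (X : path) : Prop := forall rw i, ex_RInt (sig_integrand X rw i) 0 1.

Definition segment (a v : nat -> R) : path := fun i t => a i + v i * t.

Definition prod_letters (v : nat -> R) (w : list nat) : R :=
  fold_right (fun i acc => v i * acc) 1 w.

Lemma right_affine_at_segment a v i s : right_affine_at (segment a v i) s (v i).
Proof. exists 1. split; [lra|]. intros h _. unfold segment. ring. Qed.

Lemma right_affine_segment a v : right_affine (segment a v).
Proof. intros i s. exists (v i). apply right_affine_at_segment. Qed.

Lemma sig_rev_segment a v rw t :
  sig_rev (segment a v) rw t = prod_letters v rw * t ^ length rw / INR (fact (length rw)).
Proof.
  revert t. induction rw as [|i rw IH]; intros t; [simpl; field|].
  set (k := length rw). set (c := prod_letters v rw / INR (fact k) * v i).
  apply is_RInt_unique.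
  apply (is_RInt_extR (fun s => c * s ^ k)).
  { intros x _. unfold c. rewrite IH, (Derive_right_affine_at _ _ _ (right_affine_at_segment a v i x)).
    unfold k. field. apply INR_fact_neq_0. }
  replace (prod_letters v (i :: rw) * t ^ length (i :: rw) / INR (fact (length (i :: rw))))
    with (minus (c / INR (S k) * t ^ S k) (c / INR (S k) * 0 ^ S k)).
  2:{ change (minus ?x ?y) with (x - y).
      change (length (i :: rw)) with (S k). change (fact (S k)) with (S k * fact k)%nat.
      change (prod_letters v (i :: rw)) with (v i * prod_letters v rw).
      rewrite mult_INR, S_INR. unfold c. cbn [pow].
      real_eq. field. split; [apply INR_fact_neq_0|]. pose proof (pos_INR k). lra. }
  apply (is_RInt_derive (fun s => c / INR (S k) * s ^ S k)).
  - intros x _. auto_derive; [exact I|].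
    change (match k with 0%nat => 1 | S _ => INR k + 1 end) with (INR (S k)).
    field. apply not_0_INR. lia.
  - intros x _. apply (ex_derive_continuous (fun s => c * s ^ k)). auto_derive. exact I.
Qed.

Lemma integrable_segment a v : integrable (segment a v).
Proof.
  intros rw i.
  set (c := prod_letters v rw / INR (fact (length rw)) * v i).
  apply (ex_RInt_ext (fun s => c * s ^ length rw)).
  - intros x _. unfold sig_integrand, c. rewrite sig_rev_segment,
      (Derive_right_affine_at _ _ _ (right_affine_at_segment a v i x)).
    real_eq. field. apply INR_fact_neq_0.
  - apply (@ex_RInt_continuous R_CompleteNormedModule). intros z _.
    apply (ex_derive_continuous (fun s => c * s ^ length rw)). auto_derive. exact I.
Qed.

Lemma prod_letters_app v a b : prod_letters v (a ++ b) = prod_letters v a * prod_letters v b.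
Proof. induction a as [|x a IH]; simpl; [ring|]. unfold prod_letters in *. rewrite IH. ring. Qed.

Lemma prod_letters_rev v w : prod_letters v (rev w) = prod_letters v w.
Proof.
  induction w as [|x w IH]; [reflexivity|]. simpl rev. rewrite prod_letters_app, IH.
  unfold prod_letters; simpl. ring.
Qed.

Lemma sig_segment a v w : sig (segment a v) w = prod_letters v w / INR (fact (length w)).
Proof.
  unfold sig. rewrite sig_rev_segment, pow1, Rmult_1_r, length_rev, prod_letters_rev.
  reflexivity.
Qed.

(** * Signatures of concatenations *)

Lemma concat_left X Y i s : s <= 1/2 -> concat X Y i s = X i (2 * s).
Proof. intros H. unfold concat. destruct (Rle_dec s (1/2)); [reflexivity|lra]. Qed.

Lemma concat_right X Y i s : 1/2 <= s -> concat X Y i s = Y i (2 * s - 1) - Y i 0 + X i 1.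
Proof.
  intros H. unfold concat. destruct (Rle_dec s (1/2)); [|reflexivity].
  replace s with (1/2) by lra. replace (2 * (1/2) - 1) with 0 by lra.
  replace (2 * (1/2)) with 1 by lra. ring.
Qed.

Lemma right_affine_at_concat_l X Y i s D : s < 1/2 ->
  right_affine_at (X i) (2 * s) D -> right_affine_at (concat X Y i) s (2 * D).
Proof.
  intros Hs [dl [Hdl H]]. exists (Rmin (dl / 2) (1/2 - s)).
  split; [apply Rmin_glb_lt; lra|].
  intros h Hh. pose proof (Rmin_l (dl / 2) (1/2 - s)). pose proof (Rmin_r (dl / 2) (1/2 - s)).
  rewrite !concat_left by lra. replace (2 * (s + h)) with (2 * s + 2 * h) by ring.
  rewrite H by lra. ring.
Qed.

Lemma right_affine_at_concat_r X Y i s D : 1/2 <= s ->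
  right_affine_at (Y i) (2 * s - 1) D -> right_affine_at (concat X Y i) s (2 * D).
Proof.
  intros Hs [dl [Hdl H]]. exists (dl / 2). split; [lra|].
  intros h Hh. rewrite !concat_right by lra.
  replace (2 * (s + h) - 1) with (2 * s - 1 + 2 * h) by ring. rewrite H by lra. ring.
Qed.

Lemma right_affine_concat X Y : right_affine X -> right_affine Y -> right_affine (concat X Y).
Proof.
  intros HX HY i s. destruct (Rlt_dec s (1/2)) as [Hs|Hs].
  - destruct (HX i (2 * s)) as [D HD]. exists (2 * D). apply right_affine_at_concat_l; auto.
  - destruct (HY i (2 * s - 1)) as [D HD]. exists (2 * D).
    apply right_affine_at_concat_r; [lra|auto].
Qed.

Lemma Derive_concat_l X Y i s : right_affine X -> s < 1/2 ->
  Derive (concat X Y i) s = 2 * Derive (X i) (2 * s).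
Proof.
  intros HX Hs. destruct (HX i (2 * s)) as [D HD].
  rewrite (Derive_right_affine_at _ _ _ HD).
  apply Derive_right_affine_at, right_affine_at_concat_l; auto.
Qed.

Lemma Derive_concat_r X Y i s : right_affine Y -> 1/2 <= s ->
  Derive (concat X Y i) s = 2 * Derive (Y i) (2 * s - 1).
Proof.
  intros HY Hs. destruct (HY i (2 * s - 1)) as [D HD].
  rewrite (Derive_right_affine_at _ _ _ HD).
  apply Derive_right_affine_at, right_affine_at_concat_r; auto.
Qed.

Lemma is_RInt_concat_left X Y rw i t : right_affine X -> integrable X -> 0 <= t <= 1/2 ->
  (forall s, 0 <= s <= 1/2 -> sig_rev (concat X Y) rw s = sig_rev X rw (2 * s)) ->
  is_RInt (sig_integrand (concat X Y) rw i) 0 t (sig_rev X (i :: rw) (2 * t)).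
Proof.
  intros HX IX Ht Hrw.
  apply (is_RInt_extR (fun s => 2 * sig_integrand X rw i (2 * s + 0))).
  - intros s Hs. rewrite Rmin_left, Rmax_right in Hs by lra. unfold sig_integrand.
    rewrite Hrw, Derive_concat_l by (auto; lra). rewrite Rplus_0_r. ring.
  - apply is_RInt_comp_linR. rewrite Rmult_0_r, !Rplus_0_r.
    apply (is_RInt_subinterval _ 0 (2 * t) 1); [lra|apply IX].
Qed.

Lemma sig_concat_left X Y : right_affine X -> integrable X ->
  forall rw t, 0 <= t <= 1/2 -> sig_rev (concat X Y) rw t = sig_rev X rw (2 * t).
Proof.
  intros HX IX rw. induction rw as [|i rw IH]; intros t Ht; [reflexivity|].
  apply is_RInt_unique, is_RInt_concat_left; auto.
Qed.

Lemma is_RInt_concat_right X Y rw i t : right_affine Y -> integrable Y -> 1/2 <= t <= 1 ->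
  (forall s, 1/2 <= s <= 1 -> sig_rev (concat X Y) rw s =
     sum_split rw (fun r2 r1 => sig_rev Y r2 (2 * s - 1) * sig_rev X r1 1)) ->
  is_RInt (sig_integrand (concat X Y) rw i) (1/2) t
    (sum_split rw (fun r2 r1 => sig_rev Y (i :: r2) (2 * t - 1) * sig_rev X r1 1)).
Proof.
  intros HY IY Ht Hrw.
  set (h := fun u => sum_split rw (fun r2 r1 => sig_rev X r1 1 * sig_integrand Y r2 i u)).
  apply (is_RInt_extR (fun s => 2 * h (2 * s + -1))).
  - intros s Hs. rewrite Rmin_left, Rmax_right in Hs by lra. unfold h, sig_integrand.
    rewrite Hrw, Derive_concat_r by (auto; lra). replace (2 * s + -1) with (2 * s - 1) by ring.
    rewrite sum_split_mult_r, (Rmult_comm 2), sum_split_mult_r.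
    apply sum_split_ext. intros; ring.
  - apply is_RInt_comp_linR. replace (2 * (1/2) + -1) with 0 by field.
    replace (2 * t + -1) with (2 * t - 1) by ring.
    apply is_RInt_sum_split. intros r2 r1. rewrite (Rmult_comm (sig_rev Y _ _)). apply is_RInt_scalR.
    apply (is_RInt_subinterval _ 0 (2 * t - 1) 1); [lra|apply IY].
Qed.

(* [sig_rev] reads words backwards, so the letters read along [X] form the suffix [r1]. *)
Lemma sig_concat_right X Y : right_affine X -> integrable X -> right_affine Y -> integrable Y ->
  forall rw t, 1/2 <= t <= 1 ->
  sig_rev (concat X Y) rw t = sum_split rw (fun r2 r1 => sig_rev Y r2 (2 * t - 1) * sig_rev X r1 1).
Proof.
  intros HX IX HY IY rw. induction rw as [|i rw IH]; intros t Ht; [simpl; ring|].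
  apply is_RInt_unique. cbn [sum_split].
  change (sig_rev Y [] (2 * t - 1)) with 1. rewrite Rmult_1_l.
  apply (is_RInt_ChaslesR _ 0 (1/2) t).
  - replace (sig_rev X (i :: rw) 1) with (sig_rev X (i :: rw) (2 * (1/2))) by (f_equal; field).
    apply is_RInt_concat_left; auto; [lra|]. intros; apply sig_concat_left; auto.
  - apply is_RInt_concat_right; auto.
Qed.

Lemma integrable_concat X Y : right_affine X -> integrable X -> right_affine Y -> integrable Y ->
  integrable (concat X Y).
Proof.
  intros HX IX HY IY rw i. eexists. apply (is_RInt_ChaslesR _ 0 (1/2) 1).
  - apply is_RInt_concat_left; auto; [lra|]. intros; apply sig_concat_left; auto.
  - apply is_RInt_concat_right; auto; [lra|]. intros; apply sig_concat_right; auto.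
Qed.

Inductive polygonal : path -> Prop :=
  | polygonal_segment a v : polygonal (segment a v)
  | polygonal_concat X Y : polygonal X -> polygonal Y -> polygonal (concat X Y).

Lemma polygonal_regular X : polygonal X -> right_affine X /\ integrable X.
Proof.
  induction 1 as [a v|X Y _ [HX IX] _ [HY IY]].
  - split; [apply right_affine_segment|apply integrable_segment].
  - split; [apply right_affine_concat|apply integrable_concat]; auto.
Qed.

Theorem sig_concat X Y w : polygonal X -> polygonal Y ->
  sig (concat X Y) w = sum_split w (fun p q => sig X p * sig Y q).
Proof.
  intros GX GY. destruct (polygonal_regular X GX) as [HX IX].
  destruct (polygonal_regular Y GY) as [HY IY].
  unfold sig. rewrite sig_concat_right, sum_split_rev by (auto; lra).
  replace (2 * 1 - 1) with 1 by ring. apply sum_split_ext. intros p q. ring.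
Qed.

Definition piecewise_affine (X : path) : Prop :=
  exists n (t : nat -> R), t O = 0 /\ t n = 1 /\
    (forall j, (j < n)%nat -> t j < t (S j)) /\
    (forall j i, (j < n)%nat -> exists a c, forall s, t j <= s <= t (S j) -> X i s = a + c * s).

Lemma increasing_le n (t : nat -> R) : (forall j, (j < n)%nat -> t j < t (S j)) ->
  forall j k, (j <= k <= n)%nat -> t j <= t k.
Proof.
  intros H j k. induction k as [|k IH]; intros Hk.
  - replace j with 0%nat by lia. lra.
  - destruct (Nat.eq_dec j (S k)) as [->|Hne]; [lra|].
    apply Rle_trans with (t k); [apply IH; lia|left; apply H; lia].
Qed.

Lemma piecewise_affine_segment a v : piecewise_affine (segment a v).
Proof.
  exists 1%nat, INR. repeat split.
  - intros j Hj. replace j with 0%nat by lia. simpl. lra.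
  - intros j i _. exists (a i), (v i). reflexivity.
Qed.

Lemma piecewise_affine_concat X Y :
  piecewise_affine X -> piecewise_affine Y -> piecewise_affine (concat X Y).
Proof.
  intros [n [t [Ht0 [Htn [Hinc Hpc]]]]] [p [u [Hu0 [Hup [Huinc Hupc]]]]].
  assert (Hp : (0 < p)%nat) by (destruct p; [rewrite Hu0 in Hup; lra|lia]).
  set (w := fun j => if (j <=? n)%nat then t j / 2 else (1 + u (j - n)%nat) / 2).
  assert (Wl : forall j, (j <= n)%nat -> w j = t j / 2).
  { intros j Hj. unfold w. destruct (Nat.leb_spec j n); [reflexivity|lia]. }
  assert (Wr : forall j, (n <= j)%nat -> w j = (1 + u (j - n)%nat) / 2).
  { intros j Hj. unfold w. destruct (Nat.leb_spec j n); [|reflexivity].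
    replace j with n by lia. rewrite Nat.sub_diag, Hu0, Htn. lra. }
  assert (Tle : forall j, (j <= n)%nat -> t j <= 1).
  { intros j Hj. rewrite <- Htn. apply (increasing_le n t Hinc). lia. }
  assert (Uge : forall j, (j <= p)%nat -> 0 <= u j).
  { intros j Hj. rewrite <- Hu0. apply (increasing_le p u Huinc). lia. }
  exists (n + p)%nat, w. repeat split.
  - rewrite Wl, Ht0 by lia. lra.
  - rewrite Wr by lia. replace (n + p - n)%nat with p by lia. rewrite Hup. lra.
  - intros j Hj. destruct (Nat.lt_ge_cases j n) as [Hjn|Hjn].
    + rewrite !Wl by lia. pose proof (Hinc j Hjn). lra.
    + rewrite !Wr by lia. replace (S j - n)%nat with (S (j - n)) by lia.
      pose proof (Huinc (j - n)%nat ltac:(lia)). lra.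
  - intros j i Hj. destruct (Nat.lt_ge_cases j n) as [Hjn|Hjn].
    + destruct (Hpc j i Hjn) as [a [c Hac]]. exists a, (2 * c). intros s Hs.
      rewrite !Wl in Hs by lia. pose proof (Tle (S j) ltac:(lia)).
      rewrite concat_left, Hac by lra. ring.
    + destruct (Hupc (j - n)%nat i ltac:(lia)) as [a [c Hac]].
      exists (a - c - Y i 0 + X i 1), (2 * c). intros s Hs.
      rewrite !Wr in Hs by lia. replace (S j - n)%nat with (S (j - n)) in Hs by lia.
      pose proof (Uge (j - n)%nat ltac:(lia)).
      rewrite concat_right, Hac by lra. ring.
Qed.

Lemma smooth_affine a c : smooth (fun s => a + c * s).
Proof.
  intros n x.
  assert (H : exists a' c', forall y, Derive_n (fun s => a + c * s) n y = a' + c' * y).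
  { induction n as [|n [a' [c' IH]]]; [exists a, c; reflexivity|].
    exists c', 0. intros y. simpl. apply Derive_right_affine_at.
    exists 1. split; [lra|]. intros h _. rewrite !IH. ring. }
  destruct H as [a' [c' Hn]].
  apply (ex_derive_ext (fun s => a' + c' * s)); [intros; symmetry; apply Hn|].
  auto_derive. exact I.
Qed.

Lemma piecewise_smooth_polygonal d X : polygonal X -> piecewise_smooth d X.
Proof.
  intros HX.
  assert (HPA : piecewise_affine X).
  { induction HX; [apply piecewise_affine_segment|apply piecewise_affine_concat; auto]. }
  destruct HPA as [n [t [H0 [H1 [H2 H3]]]]]. exists n, t. repeat split; auto.
  intros j i Hj _. destruct (H3 j i Hj) as [a [c Hac]].
  exists (fun s => a + c * s). split; [apply smooth_affine|exact Hac].
Qed.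

Definition basis_vec (b : nat) (c : R) : nat -> R := fun i => if Nat.eqb i b then c else 0.

Lemma basis_vec_at_0 b k i : basis_vec b (k * 0) i = 0.
Proof. unfold basis_vec. destruct (Nat.eqb i b); ring. Qed.

Lemma prod_letters_vanish v w : (forall i, v i = 0) -> prod_letters v w = ind_nil w.
Proof. intros Hv. destruct w as [|x w]; [reflexivity|]. unfold prod_letters; simpl. rewrite Hv. ring. Qed.

Lemma sig_still_segment a v w : (forall i, v i = 0) -> sig (segment a v) w = ind_nil w.
Proof.
  intros Hv. rewrite sig_segment, prod_letters_vanish by exact Hv.
  destruct w; simpl; unfold Rdiv; [rewrite Rinv_1|]; ring.
Qed.

Lemma is_derive_prod_letters b k p :
  is_derive (fun e => prod_letters (basis_vec b (k * e)) p) 0 (k * ind_letter b p).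
Proof.
  induction p as [|x p IH].
  - apply (is_derive_value (fun _ => 1) _ 0); [apply is_derive_constR|simpl; ring].
  - set (dv := if Nat.eqb x b then k else 0).
    assert (Hv : is_derive (fun e => basis_vec b (k * e) x) 0 dv).
    { unfold basis_vec, dv. destruct (Nat.eqb x b); [|apply is_derive_constR].
      auto_derive; [exact I|ring]. }
    pose proof (is_derive_multR _ _ 0 _ _ Hv IH) as H.
    apply (is_derive_value _ _ _ _ H).
    rewrite prod_letters_vanish, basis_vec_at_0 by apply basis_vec_at_0. unfold dv.
    destruct p as [|y p]; simpl; destruct (Nat.eqb x b); ring.
Qed.

Lemma is_derive_sig_segment (a : R -> nat -> R) b k w :
  is_derive (fun e => sig (segment (a e) (basis_vec b (k * e))) w) 0 (k * ind_letter b w).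
Proof.
  apply (is_derive_ext (fun e => prod_letters (basis_vec b (k * e)) w * / INR (fact (length w)))).
  { intros e. rewrite sig_segment. reflexivity. }
  apply (is_derive_value _ _ _ _ (is_derive_multR _ _ 0 _ _ (is_derive_prod_letters b k w)
                                    (is_derive_constR _ 0))).
  destruct w as [|x [|y r]]; simpl; try ring. rewrite Rinv_1. ring.
Qed.

Lemma is_derive_sig_concat (X Y : R -> path) X' Y' x w :
  (forall e, polygonal (X e)) -> (forall e, polygonal (Y e)) ->
  (forall p, is_derive (fun e => sig (X e) p) x (X' p)) ->
  (forall q, is_derive (fun e => sig (Y e) q) x (Y' q)) ->
  is_derive (fun e => sig (concat (X e) (Y e)) w) x
    (sum_split w (fun p q => X' p * sig (Y x) q + sig (X x) p * Y' q)).
Proof.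
  intros GX GY HX HY.
  apply (is_derive_ext (fun e => sum_split w (fun p q => sig (X e) p * sig (Y e) q))).
  { intros e. symmetry. apply sig_concat; auto. }
  apply is_derive_sum_split. intros p q. apply is_derive_multR; auto.
Qed.

(** * Separation of words by polygonal signatures *)

Theorem polygonal_signatures_separate d k (psi : list nat -> R) :
  (forall A, polygonal A -> lsum (words k d) (fun q => psi q * sig A q) = 0) ->
  forall q, In q (words k d) -> psi q = 0.
Proof.
  revert psi. induction k as [|k IH]; intros psi H q Hq.
  - simpl in Hq. destruct Hq as [<-|[]].
    specialize (H (segment (fun _ => 0) (fun _ => 0)) (polygonal_segment _ _)).
    unfold lsum, sig in H; simpl in H. lra.
  - destruct (words_S_snoc _ _ _ Hq) as [q' [c [-> [Hq' Hc]]]].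
    clear Hq. revert q' Hq'. apply (IH (fun q' => psi (q' ++ [c]))). intros A HA.
    set (C e := segment (fun _ => 0) (basis_vec c (1 * e))).
    rewrite <- (lsum_words_split_letter_r k d c psi (sig A)) by exact Hc.
    apply (is_derive_const_eq0
      (fun e => lsum (words (S k) d) (fun w => psi w * sig (concat A (C e)) w)) 0 0).
    { intros e. apply H. repeat constructor; auto. }
    apply is_derive_lsum. intros w. apply is_derive_scal.
    eapply is_derive_value.
    { apply (is_derive_sig_concat (fun _ => A) C (fun _ => 0) (fun r => 1 * ind_letter c r));
        intros; [auto|constructor|apply is_derive_constR|apply is_derive_sig_segment]. }
    apply sum_split_ext. intros p r. ring.
Qed.

(** * Conjugation invariants *)

Lemma conjugation_invariant_cyclic m d phi b A : (b < d)%nat -> polygonal A ->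
  conjugation_invariant (S m) d phi ->
  lsum (words m d) (fun q => (phi (b :: q) - phi (q ++ [b])) * sig A q) = 0.
Proof.
  intros Hb HA Hc.
  set (B e := segment (fun _ => 0) (basis_vec b (1 * e))).
  set (Bbar e := segment (basis_vec b e) (basis_vec b (-1 * e))).
  assert (HBbar : forall e, reverse (B e) = Bbar e).
  { intros e. extensionality i; extensionality t. unfold reverse, B, Bbar, segment, basis_vec.
    destruct (Nat.eqb i b); ring. }
  assert (HB0 : forall p, sig (B 0) p = ind_nil p)
    by (intros; unfold B; apply sig_still_segment, basis_vec_at_0).
  assert (HA0 : forall q, sig (concat A (Bbar 0)) q = sig A q).
  { intros q. rewrite sig_concat by (auto; constructor).
    rewrite (sum_split_ext _ _ (fun p r => sig A p * ind_nil r)), sum_split_nil_r; [reflexivity|].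
    intros p r. unfold Bbar. rewrite sig_still_segment by apply basis_vec_at_0. reflexivity. }
  assert (Hder : is_derive (fun e => pairing (S m) d (concat (B e) (concat A (Bbar e))) phi) 0
    (lsum (words (S m) d) (fun w => phi w * sum_split w (fun p q => ind_letter b p * sig A q)
                                  - phi w * sum_split w (fun p q => sig A p * ind_letter b q)))).
  { unfold pairing, sum_words. change (fold_right Rplus 0 (map ?f ?l)) with (lsum l f).
    apply is_derive_lsum. intros w. eapply is_derive_value; [apply is_derive_scal|].
    { apply (is_derive_sig_concat B (fun e => concat A (Bbar e)) (fun p => 1 * ind_letter b p)
        (fun q => sum_split q (fun q1 q2 => 0 * sig (Bbar 0) q2 + sig A q1 * (-1 * ind_letter b q2)))).
      - intros; constructor.
      - intros; repeat constructor; auto.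
      - intros; apply is_derive_sig_segment.
      - intros q. apply (is_derive_sig_concat (fun _ => A) Bbar); intros;
          [auto|constructor|apply is_derive_constR|apply is_derive_sig_segment]. }
    cbv beta.
    rewrite (sum_split_ext w _ (fun p q => ind_letter b p * sig A q
               + ind_nil p * (sum_split q (fun q1 q2 => sig A q1 * ind_letter b q2) * -1))).
    - rewrite sum_split_plus, sum_split_nil_l. real_eq. ring.
    - intros p q. rewrite HA0, HB0, sum_split_mult_r. f_equal; [ring|]. f_equal.
      apply sum_split_ext. intros; ring. }
  apply (is_derive_const_eq0 _ (pairing (S m) d A phi)) in Hder.
  2:{ intros e. rewrite <- HBbar. symmetry.
      apply Hc; apply piecewise_smooth_polygonal; [auto|constructor]. }
  rewrite lsum_minus, lsum_words_split_letter_l, lsum_words_split_letter_r in Hder by exact Hb.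
  rewrite <- Hder, <- lsum_minus. apply lsum_ext_in. intros; ring.
Qed.

Lemma conjugation_invariant_rotate m d phi b q : conjugation_invariant (S m) d phi ->
  (b < d)%nat -> In q (words m d) -> phi (b :: q) = phi (q ++ [b]).
Proof.
  intros Hc Hb Hq. apply Rminus_diag_uniq. revert q Hq.
  apply (polygonal_signatures_separate d m (fun q => phi (b :: q) - phi (q ++ [b]))).
  intros A HA. apply conjugation_invariant_cyclic; auto.
Qed.

Lemma shiftT_cons m d phi b q : (b < d)%nat -> In q (words m d) ->
  shiftT (S m) d phi (b :: q) = phi (q ++ [b]).
Proof.
  intros Hb Hq. unfold shiftT, sum_words. change (fold_right Rplus 0 (map ?f ?l)) with (lsum l f).
  rewrite (lsum_ext_in _ _ (fun w => if list_eq_dec Nat.eq_dec w (q ++ [b]) then phi w else 0)).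
  - apply lsum_words_delta, In_words_snoc. auto.
  - intros w _. destruct (list_eq_dec Nat.eq_dec (shift_word w) (b :: q)) as [E|E];
      destruct (list_eq_dec Nat.eq_dec w (q ++ [b])) as [E'|E']; try reflexivity.
    + apply shift_word_eq_cons in E. contradiction.
    + apply shift_word_eq_cons in E'. contradiction.
Qed.

Theorem mainTheorem5 (m d : nat) (phi : tensor) :
  conjugation_invariant m d phi ->
  forall v, In v (words m d) -> phi v = shiftT m d phi v.
Proof.
  intros Hc v Hv. destruct m as [|m].
  - simpl in Hv. destruct Hv as [<-|[]]. unfold shiftT, sum_words. simpl. ring.
  - destruct (words_S_cons _ _ _ Hv) as [b [q [-> [Hb Hq]]]].
    rewrite shiftT_cons by assumption. apply (conjugation_invariant_rotate m d); assumption.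
Qed.
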